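(* Let $\Sigma=(X,\mathcal{S},\phi)$ be a forward complete dynamical system. Let $t_1>0$, $G_0>0$, and let $\beta$ be a function of class $\mathcal{K}_\infty$ such that $\limsup_{r\downarrow 0}\frac{\beta(r)}{r}<+\infty$ and $$\|\phi(t,x,\sigma)\|\le G_0\,\beta(\|x\|)\quad \text{for all } t\in[0,t_1],\ x\in X,\ \sigma\in\mathcal{S}.$$ Then: (i) If there exist $R>0$, a functional $V:B_X(0,R)\to\mathbb{R}_+$ and $p,c>0$ such that for every $x\in B_X(0,R)$ and $\sigma\in\mathcal{S}$, $$V(x)\le c\|x\|^p,\qquad \underline{D}_\sigma V(x)\le -\|x\|^p,$$ and such that, for every $x\in B_X(0,R)$ and $\sigma\in\mathcal{S}$, the map $t\mapsto V(\phi(t,x,\sigma))$ is continuous from the left at every $t>0$ such that $\phi(t,x,\sigma)\in B_X(0,R)$, then $\Sigma$ is ULES. (ii) If for every $R>0$ there exist $V_R:B_X(0,R)\to\mathbb{R}_+$, $p_R>0$, $c_R>0$ satisfying all the hypotheses of (i) with $V=V_R$, $p=p_R$, $c=c_R$, and moreover $$\limsup_{R\to+\infty}\beta^{-1}\!\left(\frac{R}{G_0}\right)\min\left\{1,\left(\frac{t_1}{c_R}\right)^{1/p_R}\right\}=+\infty,$$ then $\Sigma$ is USGES. (iii) If $\beta$ is the identity function and there exist $p,c>0$ and a functional $V:X\to\mathbb{R}_+$ such that for every $x\in X$ and $\sigma\in\mathcal{S}$ the map $t\mapsto V(\phi(t,x,\sigma))$ is continuous from the left, $V(x)\le c\|x\|^p$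 and $\underline{D}_\sigma V(x)\le-\|x\|^p$, then $\Sigma$ is UGES.
   Context: $(X,\|\cdot\|)$ is a Banach space and $B_X(x,r)$ is the closed ball of center $x$ and radius $r$. A function $\alpha:\mathbb{R}_+\to\mathbb{R}_+$ is of class $\mathcal{K}_\infty$ if it is continuous, increasing, unbounded and $\alpha(0)=0$. Let $\mathcal{Q}$ be a nonempty set and $\mathcal{S}$ a set of functions $\sigma:\mathbb{R}_+\to\mathcal{Q}$ closed by time-shift (for $\sigma\in\mathcal{S}$, $\tau\ge0$, $\mathbb{T}_\tau\sigma:s\mapsto\sigma(\tau+s)$ is in $\mathcal{S}$) and by concatenation (for $\sigma_1,\sigma_2\in\mathcal{S}$, $\tau>0$, the function equal to $\sigma_1$ on $[0,\tau]$ and with $\sigma(\tau+t)=\sigma_2(t)$ for $t>0$ is in $\mathcal{S}$). A triple $\Sigma=(X,\mathcal{S},\phi)$ with $\phi:\mathbb{R}_+\times X\times\mathcal{S}\to X$ is a forward complete dynamical system if: $\phi(0,x,\sigma)=x$; $\phi(t,x,\tilde\sigma)=\phi(t,x,\sigma)$ whenever $\tilde\sigma=\sigma$ on $[0,t]$; $t\mapsto\phi(t,x,\sigma)$ is continuous; $\phi(\tau,\phi(t,x,\sigma),\mathbb{T}_t\sigma)=\phi(t+\tau,x,\sigma)$ for all $t,\tau\ge0$. The lower Dini derivative of $V$ along $\Sigma$ is $\underline{D}_\sigma V(x)=\liminf_{h\downarrow0}\frac1h\big(V(\phi(h,x,\sigma))-V(x)\big)$. $\Sigma$ is ULES if there exist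 $R,M,\lambda>0$ with $\|\phi(t,x,\sigma)\|\le Me^{-\lambda t}\|x\|$ for all $t\ge0$, $x\in B_X(0,R)$, $\sigma\in\mathcal{S}$; USGES if for every $r>0$ there exist $M(r),\lambda(r)>0$ with $\|\phi(t,x,\sigma)\|\le M(r)e^{-\lambda(r)t}\|x\|$ for all $t\ge0$, $x\in B_X(0,r)$, $\sigma\in\mathcal{S}$; UGES if there exist $M,\lambda>0$ with $\|\phi(t,x,\sigma)\|\le Me^{-\lambda t}\|x\|$ for all $t\ge0$, $x\in X$, $\sigma\in\mathcal{S}$. *)

From HB Require Import structures.
From mathcomp Require Import all_boot all_order all_algebra.
From mathcomp Require Import all_classical all_reals all_analysis.
Set Implicit Arguments. Unset Strict Implicit. Unset Printing Implicit Defensive.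
Import Order.TTheory GRing.Theory Num.Theory.
Import numFieldNormedType.Exports.
Local Open Scope classical_set_scope.
Local Open Scope ring_scope.

Section Defs.
Variables (R : realType) (X : normedModType R) (Q : Type).

(* Signals sigma : R_+ -> Q are represented as functions R -> Q; only
   their values on [0, +oo) matter (causality below). *)
Definition tshift (tau : R) (sigma : R -> Q) : R -> Q := fun s => sigma (tau + s).
Definition concat (sigma1 sigma2 : R -> Q) (tau : R) : R -> Q :=
  fun t => if t <= tau then sigma1 t else sigma2 (t - tau).

Definition signal_set (S : set (R -> Q)) : Prop :=
  [/\ S !=set0,
      (forall sigma tau, S sigma -> 0 <= tau -> S (tshift tau sigma)) &
      (forall sigma1 sigma2 tau, S sigma1 -> S sigma2 -> 0 < tau ->
         S (concat sigma1 sigma2 tau))].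

Definition fwd_complete (S : set (R -> Q)) (phi : R -> X -> (R -> Q) -> X) : Prop :=
  [/\ (forall x sigma, S sigma -> phi 0 x sigma = x),
      (forall t x sigma sigma', S sigma -> S sigma' -> 0 <= t ->
         (forall s, 0 <= s <= t -> sigma' s = sigma s) ->
         phi t x sigma' = phi t x sigma),
      (forall x sigma, S sigma ->
         {within [set t | 0 <= t], continuous (fun t => phi t x sigma)}) &
      (forall t tau x sigma, S sigma -> 0 <= t -> 0 <= tau ->
         phi tau (phi t x sigma) (tshift t sigma) = phi (t + tau) x sigma)].

Definition cball (r : R) : set X := [set x | `|x| <= r].

Definition classKinf (beta : R -> R) : Prop :=
  [/\ {within [set r | 0 <= r], continuous beta},
      (forall r s, 0 <= r -> r < s -> beta r < beta s),
      (forall M, exists r, 0 <= r /\ M < beta r) &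
      beta 0 = 0].

Definition Kinv (beta : R -> R) (y : R) : R :=
  xget 0 [set r | 0 <= r /\ beta r = y].

Definition limsup_0right (f : R -> R) : \bar R :=
  ereal_inf [set ereal_sup [set (f r)%:E | r in [set r | 0 < r < d]]
            | d in [set d | 0 < d]].

Definition limsup_pinfty (f : R -> R) : \bar R :=
  ereal_inf [set ereal_sup [set (f r)%:E | r in [set r | r0 <= r /\ 0 < r]]
            | r0 in [set: R]].

(* lower Dini derivative of V along the system, for V defined on D:
   liminf_{h -> 0+} (V(phi(h,x,sigma)) - V(x))/h, the liminf being taken
   over those h for which phi(h,x,sigma) lies in the domain D of V. *)
Definition dini_lower (phi : R -> X -> (R -> Q) -> X) (D : set X) (V : X -> R)
    (x : X) (sigma : R -> Q) : \bar R :=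
  ereal_sup [set ereal_inf [set ((V (phi h x sigma) - V x) / h)%:E
                           | h in [set h | 0 < h < d /\ D (phi h x sigma)]]
            | d in [set d | 0 < d]].

(* Lyapunov hypotheses on a domain D (D = B_X(0,R) in (i),(ii); D = X in (iii)) *)
Definition lyap_hyp (S : set (R -> Q)) (phi : R -> X -> (R -> Q) -> X)
    (D : set X) (V : X -> R) (p c : R) : Prop :=
  [/\ 0 < p, 0 < c,
      (forall x, D x -> 0 <= V x),
      (forall x sigma, D x -> S sigma ->
         V x <= c * (`|x| `^ p) /\
         (dini_lower phi D V x sigma <= (- (`|x| `^ p))%:E)%E) &
      (forall x sigma, D x -> S sigma -> forall t, 0 < t -> D (phi t x sigma) ->
         forall eps, 0 < eps -> exists2 del, 0 < del &
           forall s, t - del < s <= t -> D (phi s x sigma) ->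
             `|V (phi s x sigma) - V (phi t x sigma)| < eps)].

Definition ULES (S : set (R -> Q)) (phi : R -> X -> (R -> Q) -> X) : Prop :=
  exists r M lam, [/\ 0 < r, 0 < M, 0 < lam &
    forall t x sigma, 0 <= t -> `|x| <= r -> S sigma ->
      `|phi t x sigma| <= M * expR (- (lam * t)) * `|x|].

Definition USGES (S : set (R -> Q)) (phi : R -> X -> (R -> Q) -> X) : Prop :=
  forall r, 0 < r -> exists M lam, [/\ 0 < M, 0 < lam &
    forall t x sigma, 0 <= t -> `|x| <= r -> S sigma ->
      `|phi t x sigma| <= M * expR (- (lam * t)) * `|x|].

Definition UGES (S : set (R -> Q)) (phi : R -> X -> (R -> Q) -> X) : Prop :=
  exists M lam, [/\ 0 < M, 0 < lam &
    forall t x sigma, 0 <= t -> S sigma ->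
      `|phi t x sigma| <= M * expR (- (lam * t)) * `|x|].

End Defs.

From HB Require Import structures.
From mathcomp Require Import all_boot all_order all_algebra.
From mathcomp Require Import all_classical all_reals all_analysis.
From mathcomp Require Import ring lra.
Import Order.TTheory GRing.Theory Num.Theory.
Import numFieldNormedType.Exports.
Local Open Scope classical_set_scope.
Local Open Scope ring_scope.
Set Implicit Arguments. Unset Strict Implicit. Unset Printing Implicit Defensive.

(* Along a trajectory, t |-> V(phi t x) + m t is nonincreasing as long as
   |phi t x|^p > m: the lower Dini derivative bound gives descent to the right of
   every time, and left continuity turns this into monotonicity by a sup argument.
   As V(x) <= c |x|^p and V >= 0, a trajectory cannot stay outside the ball of
   radius e for longer than c |x|^p / e^p.  With e = |x| / 2 the norm is halved
   within a time that does not depend on x, and iterating the halving, with the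
   a priori bound G0 beta(|x|) on windows of length t1 in between, yields an
   exponential estimate.  Near 0, beta is linearly bounded, which gives (i); when
   beta is the identity the estimate is global, which gives (iii).  For (ii), the
   limsup condition provides for every r a radius R such that trajectories from
   B(0, r) re-enter B(0, beta^-1(R / G0)) before each window of length t1 closes,
   hence never leave B(0, R); there V_R forces them into the ball of (i) within a
   uniform time. *)

Section RealLemmas.
Variable R : realType.
Implicit Types (a b m tau : R) (g : R -> R).

Definition left_continuous_on a b g :=
  forall t, a < t <= b -> forall e, 0 < e -> exists2 del, 0 < del &
    forall s, t - del < s <= t -> a <= s -> `|g s - g t| < e.

Definition right_descent_on a b g :=
  forall t, a <= t < b -> forall d, 0 < d -> exists h, [/\ 0 < h, h < d & g (t + h) <= g t].

Lemma left_continuous_on_add_linear a b m g :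
  left_continuous_on a b g -> left_continuous_on a b (fun t => g t + m * t).
Proof.
move=> lcg t tab e e0.
have [del del0 Hdel] := lcg t tab (e / 2) ltac:(by rewrite divr_gt0).
have m1 : 0 < 1 + `|m| by rewrite ltr_pwDl.
pose d := Num.min del (e / 2 / (1 + `|m|)).
have dd : d <= del by rewrite ge_min lexx.
have de : d * (1 + `|m|) <= e / 2 by rewrite -ler_pdivlMr // ge_min lexx orbT.
exists d => [|s /andP[s1 st] as_]; first by rewrite lt_min del0 !divr_gt0.
have {}Hdel := Hdel s ltac:(by rewrite st andbT; lra) as_.
have lin : `|m * s - m * t| <= e / 2.
  have ts : `|s - t| = t - s by rewrite distrC ger0_norm // subr_ge0.
  rewrite -mulrBr normrM ts.
  have : (t - s) * (1 + `|m|) <= d * (1 + `|m|) by rewrite ler_wpM2r //; lra.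
  have : `|m| * (t - s) <= (1 + `|m|) * (t - s) by rewrite ler_wpM2r ?subr_ge0 ?lerDr.
  lra.
have -> : g s + m * s - (g t + m * t) = (g s - g t) + (m * s - m * t) by ring.
by apply: le_lt_trans (ler_normD _ _) _; lra.
Qed.

Lemma right_descent_le a b g : a <= b ->
  left_continuous_on a b g -> right_descent_on a b g -> g b <= g a.
Proof.
move=> ab lcg dg.
pose A := [set t | a <= t <= b /\ g t <= g a].
have Aa : A a by rewrite /A /= lexx ab.
have hA : has_sup A by split; [exists a | exists b => t [/andP[_ ->]]].
pose s := sup A.
have as_ : a <= s := sup_upper_bound hA Aa.
have sb : s <= b by apply: ge_sup => [|t [/andP[_ ->]]]; first by exists a.
have gs : g s <= g a.
  have [<-//|a_lt_s] := eqVneq a s.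
  apply/ler_addgt0Pr => e e0.
  have [del del0 Hdel] := lcg s ltac:(by rewrite lt_neqAle a_lt_s as_ sb) e e0.
  have [t [/andP[at_ tb] gt] st] := sup_adherent del0 hA.
  have ts : t <= s := sup_upper_bound hA (conj (introT andP (conj at_ tb)) gt).
  have := Hdel t ltac:(by rewrite -/s st ts) at_.
  by move/ltr_distlCDr; lra.
suff -> : b = s by [].
apply/eqP; rewrite eq_le sb andbT leNgt; apply/negP => sb'.
have [h [h0 hd gh]] := dg s ltac:(by rewrite as_ sb') (b - s) ltac:(by rewrite subr_gt0).
have : A (s + h) by split; [apply/andP; split; lra | exact: le_trans gh gs].
by move/(sup_upper_bound hA); rewrite -/s; lra.
Qed.

Lemma real_step_ind (P : R -> Prop) tau : 0 < tau ->
  (forall t, 0 <= t -> (forall s, 0 <= s <= t - tau -> P s) -> P t) ->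
  forall t, 0 <= t -> P t.
Proof.
move=> tau0 HP.
suff Pn n : forall t, 0 <= t <= n%:R * tau -> P t.
  move=> t t0; apply: (Pn (Num.Def.trunc (t / tau)).+1); rewrite t0 /=.
  by rewrite -ler_pdivrMr // ltW // truncnS_gt.
elim: n => [|n IH] t /andP[t0 tn]; apply: HP => // s /andP[s0 st].
  by rewrite mul0r in tn; lra.
by apply: IH; rewrite s0 /=; move: tn; rewrite -natr1 mulrDl mul1r; lra.
Qed.

Lemma expRN_shift (lam s t : R) :
  expR (- (lam * (t - s))) = expR (lam * s) * expR (- (lam * t)).
Proof. by rewrite -expRD; congr expR; ring. Qed.

End RealLemmas.

Section ClassKinf.
Variable R : realType.
Implicit Types (beta : R -> R) (r s y : R).

Lemma classKinf_le beta r s : classKinf beta -> 0 <= r <= s -> beta r <= beta s.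
Proof.
case=> _ incr _ _ /andP[r0 rs].
by have [->//|r_neq_s] := eqVneq r s; rewrite ltW // incr // lt_neqAle r_neq_s.
Qed.

Lemma Kinv_spec beta y : classKinf beta -> 0 <= y ->
  0 <= Kinv beta y /\ beta (Kinv beta y) = y.
Proof.
case=> cont _ unbounded beta0 y0.
have [r [r0 yr]] := unbounded y.
apply: (@xgetPex _ 0 [set r | 0 <= r /\ beta r = y]).
have cont0r : {within `[0, r], continuous beta}.
  by apply: continuous_subspaceW cont => t; rewrite /= in_itv /= => /andP[].
have [|t] := IVT r0 cont0r (v := y).
  by rewrite beta0 ge_min y0 le_max (ltW yr) orbT.
by rewrite in_itv /= => /andP[t0 _] bt; exists t.
Qed.

Lemma linear_bound_near0 beta : beta 0 = 0 ->
  (limsup_0right (fun r => (beta r / r)%R) < +oo)%E ->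
  exists del K, 0 < del /\ forall r, 0 <= r < del -> beta r <= K * r.
Proof.
move=> beta0 /ereal_inf_lt[_ [d /= d0 <-]].
set E := [set (beta r / r)%:E | r in [set r | 0 < r < d]].
have Ed2 : E (beta (d / 2) / (d / 2))%:E by exists (d / 2) => //=; apply/andP; split; lra.
case Hs: (ereal_sup E) (ereal_sup_ubound Ed2) => [K| |] // _ _.
exists d, K; split => // r /andP[r0 rd].
have [->|r_neq0] := eqVneq r 0; first by rewrite beta0 mulr0.
have r_gt0 : 0 < r by rewrite lt_neqAle eq_sym r_neq0.
have : ((beta r / r)%:E <= K%:E)%E.
  by rewrite -Hs; apply: ereal_sup_ubound; exists r; rewrite //= r_gt0.
by rewrite lee_fin ler_pdivrMr.
Qed.

Lemma limsup_pinfty_gt (f : R -> R) M : limsup_pinfty f = +oo%E ->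
  exists2 r, 0 < r & M < f r.
Proof.
move/ereal_inf_pinfty/(_ _ (imageP _ (I : [set: R] 0))) => /= sup_oo.
have : (M%:E < +oo)%E by rewrite ltry.
by rewrite -sup_oo => /ereal_sup_gt[_ [r [_ r0] <-]]; rewrite lte_fin; exists r.
Qed.

End ClassKinf.

Section Flow.
Variables (R : realType) (X : normedModType R) (Q : Type).
Variables (S : set (R -> Q)) (phi : R -> X -> (R -> Q) -> X).
Hypotheses (sS : signal_set S) (fS : fwd_complete S phi).

Lemma signal_shift sigma s : S sigma -> 0 <= s -> S (tshift s sigma).
Proof. by case: sS => _ shift _; apply: shift. Qed.

Lemma flow0 x sigma : S sigma -> phi 0 x sigma = x.
Proof. by case: fS => phi0 _ _ _; apply: phi0. Qed.

Lemma flow_split x sigma s t : S sigma -> 0 <= s <= t ->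
  phi t x sigma = phi (t - s) (phi s x sigma) (tshift s sigma).
Proof.
case: fS => _ _ _ semi Ss /andP[s0 st].
by rewrite semi // ?subr_ge0 // addrC subrK.
Qed.

Lemma exp_decay_of_halving rho A tau : 0 < tau -> 0 <= A ->
  (forall x sigma t, `|x| <= rho -> S sigma -> 0 <= t <= 2 * tau ->
     `|phi t x sigma| <= A * `|x|) ->
  (forall x sigma, `|x| <= rho -> S sigma ->
     exists2 s, tau <= s <= 2 * tau & `|phi s x sigma| <= `|x| / 2) ->
  forall t, 0 <= t -> forall x sigma, `|x| <= rho -> S sigma ->
    `|phi t x sigma| <= 2 * A * expR (- (ln 2 / (2 * tau) * t)) * `|x|.
Proof.
move=> tau0 A0 short halve.
set lam := ln 2 / (2 * tau).
have lam_small s : 0 <= s <= 2 * tau -> expR (lam * s) <= 2.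
  move=> /andP[s0 s2]; rewrite -[X in _ <= X](@lnK _ 2) ?posrE // ler_expR.
  rewrite /lam mulrAC ler_pdivrMr ?mulr_gt0 // ler_wpM2l // ltW // ln_gt0 //.
  by rewrite ltr1n.
apply: (real_step_ind tau0) => t t0 IH x sigma xr Ss.
have [t2|t2] := leP t (2 * tau).
  apply: le_trans (short x sigma t xr Ss ltac:(by rewrite t0 t2)) _.
  have -> : 2 * A * expR (- (lam * t)) * `|x| = A * `|x| * (2 / expR (lam * t)).
    by rewrite expRN; ring.
  rewrite ler_peMr ?mulr_ge0 // ler_pdivlMr ?expR_gt0 // mul1r.
  by rewrite lam_small // t0 t2.
have [s /andP[s1 s2] hs] := halve x sigma xr Ss.
have s0 : 0 <= s by lra.
rewrite (flow_split x (s := s)) ?s0 ?(le_trans s2 (ltW t2)) //.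
have yr : `|phi s x sigma| <= rho by apply: le_trans hs _; have := normr_ge0 x; lra.
apply: le_trans (IH (t - s) _ _ _ yr (signal_shift Ss s0)) _; first by lra.
rewrite expRN_shift.
have E2 : 0 <= expR (- (lam * t)) := ltW (expR_gt0 _).
have h1 := ler_wpM2l (mulr_ge0 (mulr_ge0 (ler0n _ 2) A0)
  (mulr_ge0 (ltW (expR_gt0 (lam * s))) E2)) hs.
have h2 := ler_wpM2l (mulr_ge0 (mulr_ge0 A0 E2) (normr_ge0 x))
  (lam_small s ltac:(by rewrite s0 s2)).
by lra.
Qed.

Lemma flow_iter_bound t1 L r : 0 < t1 -> 1 <= L ->
  (forall y sigma t, `|y| <= r -> S sigma -> 0 <= t <= t1 ->
     `|phi t y sigma| <= L * `|y|) ->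
  forall n x sigma t, L ^+ n * `|x| <= r -> S sigma -> 0 <= t <= t1 * n%:R ->
    `|phi t x sigma| <= L ^+ n * `|x|.
Proof.
move=> t10 L1 step; elim=> [|n IH] x sigma t xr Ss /andP[t0 tn].
  have -> : t = 0 by rewrite mulr0 in tn; lra.
  by rewrite flow0 // expr0 mul1r.
have Ln1 : 1 <= L ^+ n by apply: exprn_ege1.
have xr' : `|x| <= r by apply: le_trans xr; rewrite ler_peMl // exprn_ege1.
have [tt1|tt1] := leP t t1.
  apply: le_trans (step x sigma t xr' Ss ltac:(by rewrite t0 tt1)) _.
  by rewrite ler_wpM2r // exprSr ler_peMl // (le_trans ler01 L1).
rewrite (flow_split x (s := t1)) ?(ltW t10) ?(ltW tt1) //.
have hy := step x sigma t1 xr' Ss ltac:(by rewrite lexx ltW).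
have hy' : L ^+ n * `|phi t1 x sigma| <= L ^+ n.+1 * `|x|.
  by rewrite exprSr -mulrA ler_wpM2l // (le_trans ler01 Ln1).
have yr := le_trans hy' xr.
apply: le_trans hy'; apply: IH yr (signal_shift Ss (ltW t10)) _.
by move: tn; rewrite -natr1 mulrDr mulr1; lra.
Qed.

Lemma exp_bound_of_reach r0 M0 lam r Rb T : 0 < r0 -> 0 < M0 -> 0 < lam -> 0 <= T ->
  (forall t x sigma, 0 <= t -> `|x| <= r0 -> S sigma ->
     `|phi t x sigma| <= M0 * expR (- (lam * t)) * `|x|) ->
  (forall t x sigma, 0 <= t -> `|x| <= r -> S sigma -> `|phi t x sigma| <= Rb) ->
  (forall x sigma, `|x| <= r -> S sigma ->
     exists2 s, 0 <= s <= T & `|phi s x sigma| <= r0) ->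
  forall t x sigma, 0 <= t -> `|x| <= r -> S sigma ->
    `|phi t x sigma| <= Num.max M0 (Rb / r0) * expR (lam * T) * expR (- (lam * t)) * `|x|.
Proof.
move=> r0_gt0 M0_gt0 lam0 T0 local bounded reach t x sigma t0 xr Ss.
set M := Num.max M0 (Rb / r0).
have M0M : M0 <= M by rewrite le_max lexx.
have eT : 1 <= expR (lam * T) by rewrite -expR0 ler_expR mulr_ge0 // ltW.
have et : 0 < expR (- (lam * t)) := expR_gt0 _.
have -> : M * expR (lam * T) * expR (- (lam * t)) * `|x| =
    M * (expR (lam * T) * expR (- (lam * t))) * `|x| by rewrite mulrA.
have [xr0|r0x] := leP `|x| r0.
  apply: le_trans (local t x sigma t0 xr0 Ss) _.
  rewrite ler_wpM2r // mulrA.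
  by rewrite ler_wpM2r ?(ltW et) // (le_trans M0M) // ler_peMr // (le_trans (ltW M0_gt0) M0M).
have [s /andP[s0 sT] hs] := reach x sigma xr Ss.
have [st|ts] := leP s t.
  rewrite (flow_split x (s := s) Ss) ?s0 ?st //.
  apply: le_trans (local _ _ _ _ hs (signal_shift Ss s0)) _; first by rewrite subr_ge0.
  rewrite expRN_shift.
  have E0 : 0 <= expR (lam * s) * expR (- (lam * t)) by rewrite mulr_ge0 // ltW // expR_gt0.
  apply: ler_pM; [exact: mulr_ge0 (ltW M0_gt0) E0 | exact: normr_ge0 | |
    exact: le_trans hs (ltW r0x)].
  apply: ler_pM => //; first exact: ltW.
  by rewrite ler_wpM2r ?(ltW et) // ler_expR ler_wpM2l // ltW.
have Rb0 : 0 <= Rb by apply: le_trans (bounded 0 x sigma (lexx 0) xr Ss).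
apply: le_trans (bounded t x sigma t0 xr Ss) _.
have e1 : 1 <= expR (lam * T) * expR (- (lam * t)).
  by rewrite -expRD -expR0 ler_expR -mulrBr mulr_ge0 ?subr_ge0 ?ltW // (lt_le_trans ts).
apply: (@le_trans _ _ (Rb / r0 * `|x|)).
  by rewrite mulrAC ler_pdivlMr // ler_wpM2l // ltW.
have RbM : Rb / r0 <= M by rewrite le_max lexx orbT.
have RbM0 : 0 <= Rb / r0 by rewrite divr_ge0 // ltW.
by rewrite ler_wpM2r // (le_trans RbM) // ler_peMr // (le_trans RbM0).
Qed.

Section Lyapunov.
Variables (D : set X) (V : X -> R) (p c : R).
Hypothesis lH : lyap_hyp S phi D V p c.

Lemma lyap_descent_at x sigma t m d : S sigma -> 0 <= t ->
  D (phi t x sigma) -> m < `|phi t x sigma| `^ p -> 0 < d ->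
  exists h, [/\ 0 < h, h < d &
    V (phi (t + h) x sigma) + m * (t + h) <= V (phi t x sigma) + m * t].
Proof.
case: lH => _ _ _ hV _ Ss t0 Dy my d0.
set y := phi t x sigma in Dy my *.
have Sst := signal_shift Ss t0.
set E := [set ((V (phi h y (tshift t sigma)) - V y) / h)%:E
           | h in [set h | 0 < h < d /\ D (phi h y (tshift t sigma))]].
have infE : (ereal_inf E <= dini_lower phi D V y (tshift t sigma))%E.
  by apply: ereal_sup_ubound; exists d.
have : (ereal_inf E < (- m)%:E)%E.
  by apply: le_lt_trans (le_trans infE (hV y _ Dy Sst).2) _; rewrite lte_fin ltrN2.
move=> /ereal_inf_lt[_ [h [/andP[h0 hd] _] <-]]; rewrite lte_fin => hz.
exists h; split => //.
have -> : phi (t + h) x sigma = phi h y (tshift t sigma).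
  by rewrite (@flow_split x sigma t) ?lerDl ?t0 ?ltW // addrAC subrr add0r.
by move: hz; rewrite ltr_pdivrMr // mulNr mulrDr; lra.
Qed.

Lemma lyap_decrease x sigma a b m : S sigma -> D x -> 0 <= a <= b ->
  (forall t, a <= t <= b -> D (phi t x sigma)) ->
  (forall t, a <= t < b -> m < `|phi t x sigma| `^ p) ->
  V (phi b x sigma) + m * b <= V (phi a x sigma) + m * a.
Proof.
move=> Ss Dx /andP[a0 ab] Dt mt.
apply: (@right_descent_le _ a b (fun t => V (phi t x sigma) + m * t)) => //.
- apply: (@left_continuous_on_add_linear _ a b m (fun t => V (phi t x sigma))).
  move=> t /andP[at_ tb] e e0.
  case: lH => _ _ _ _ lcV.
  have [del del0 Hd] := lcV x sigma Dx Ss t (le_lt_trans a0 at_)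
    (Dt t ltac:(by rewrite (ltW at_) tb)) e e0.
  exists del => // s /andP[s1 s2] as_.
  by apply: Hd; rewrite ?s1 ?s2 //; apply: Dt; rewrite as_ (le_trans s2 tb).
- move=> t /andP[at_ tb] d d0.
  apply: lyap_descent_at => //; first exact: le_trans at_.
    by apply: Dt; rewrite at_ ltW.
  by apply: mt; rewrite at_ tb.
Qed.

Lemma lyap_nonincreasing x sigma a b : S sigma -> D x -> 0 <= a <= b ->
  (forall t, a <= t <= b -> D (phi t x sigma)) ->
  V (phi b x sigma) <= V (phi a x sigma).
Proof.
move=> Ss Dx /andP[a0 ab] Dt; apply/ler_addgt0Pr => e e0.
have ba1 : 0 < b - a + 1 by lra.
pose k := e / (b - a + 1).
have k0 : 0 < k by rewrite divr_gt0.
(* the negative slope [- k] satisfies the hypothesis of [lyap_decrease] for free *)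
have mt t : a <= t < b -> - k < `|phi t x sigma| `^ p.
  by move=> _; apply: lt_le_trans (powR_ge0 _ _); rewrite oppr_lt0.
have := lyap_decrease Ss Dx (introT andP (conj a0 ab)) Dt mt.
have : k * (b - a) <= e by rewrite /k mulrAC ler_pdivrMr //; nra.
by rewrite mulrBr; lra.
Qed.

Lemma lyap_reaches_ball x sigma a b e : S sigma -> D x -> 0 <= a <= b -> 0 <= e ->
  (forall t, 0 <= t <= b -> D (phi t x sigma)) ->
  c * `|x| `^ p < (b - a) * e `^ p ->
  exists2 s, a <= s <= b & `|phi s x sigma| <= e.
Proof.
move=> Ss Dx /andP[a0 ab] e0 Dt hc; apply: contrapT => far.
have [p0 _ V0 hV _] := lH.
have mt t : a <= t < b -> e `^ p < `|phi t x sigma| `^ p.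
  move=> /andP[at_ tb]; apply: gt0_ltr_powR => //; rewrite ?nnegrE //.
  by rewrite ltNge; apply/negP => near; apply: far; exists t; rewrite ?at_ ?(ltW tb).
have Dab t : a <= t <= b -> D (phi t x sigma).
  by move=> /andP[at_ tb]; apply: Dt; rewrite (le_trans a0 at_) tb.
have D0a t : 0 <= t <= a -> D (phi t x sigma).
  by move=> /andP[t0 ta]; apply: Dt; rewrite t0 (le_trans ta ab).
have decr := lyap_decrease Ss Dx (introT andP (conj a0 ab)) Dab mt.
have := lyap_nonincreasing Ss Dx (introT andP (conj (lexx 0) a0)) D0a.
rewrite flow0 // => nonincr.
have := (hV x sigma Dx Ss).1; have := V0 _ (Dab b ltac:(by rewrite ab lexx)).
by move: hc; rewrite mulrBl [e `^ p * b]mulrC [e `^ p * a]mulrC in decr *; lra.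
Qed.

Lemma lyap_halving rho A tau : 0 < tau -> 0 <= A -> c < tau * 2^-1 `^ p ->
  (forall x sigma t, `|x| <= rho -> S sigma -> 0 <= t <= 2 * tau ->
     `|phi t x sigma| <= A * `|x|) ->
  (forall y, `|y| <= A * rho -> D y) ->
  forall x sigma, `|x| <= rho -> S sigma ->
    exists2 s, tau <= s <= 2 * tau & `|phi s x sigma| <= `|x| / 2.
Proof.
move=> tau0 A0 ctau short inD x sigma xr Ss.
have tau2 : 0 <= tau <= 2 * tau by apply/andP; split; lra.
have [x0|x_neq0] := eqVneq `|x| 0.
  exists tau; first by apply/andP; split; lra.
  by have := short x sigma tau xr Ss tau2; rewrite x0 mulr0 mul0r.
have Dt u : 0 <= u <= 2 * tau -> D (phi u x sigma).
  by move=> uu; apply/inD/(le_trans (short x sigma u xr Ss uu))/ler_wpM2l.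
have Dx : D x by rewrite -(flow0 x Ss); apply: Dt; rewrite lexx mulr_ge0 // ltW.
apply: (lyap_reaches_ball Ss Dx tau2 (divr_ge0 (normr_ge0 x) (ler0n _ 2)) Dt).
have xp_gt0 : 0 < `|x| `^ p by rewrite powR_gt0 // lt_def x_neq0 normr_ge0.
rewrite powRM ?invr_ge0 //.
have -> : (2 * tau - tau) * (`|x| `^ p * 2^-1 `^ p) = `|x| `^ p * (tau * 2^-1 `^ p).
  by ring.
by rewrite mulrC ltr_pM2l.
Qed.

Lemma lyap_exp_decay t1 L : 0 < t1 -> 1 <= L ->
  exists n lam, 0 < lam /\ forall rho,
    (forall y sigma t, `|y| <= L ^+ n * rho -> S sigma -> 0 <= t <= t1 ->
       `|phi t y sigma| <= L * `|y|) ->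
    (forall y, `|y| <= L ^+ n * rho -> D y) ->
    forall t x sigma, 0 <= t -> `|x| <= rho -> S sigma ->
      `|phi t x sigma| <= 2 * L ^+ n * expR (- (lam * t)) * `|x|.
Proof.
move=> t10 L1; have [_ c0 _ _ _] := lH.
have half_p : 0 < (2^-1 : R) `^ p by rewrite powR_gt0 // invr_gt0.
pose tau := c / 2^-1 `^ p + 1.
have tau0 : 0 < tau by rewrite ltr_wpDl // divr_ge0 // ltW.
have ctau : c < tau * 2^-1 `^ p by rewrite mulrDl divfK ?gt_eqF // mul1r ltrDl.
pose n := (Num.Def.trunc (2 * tau / t1)).+1.
have taun : 2 * tau <= t1 * n%:R.
  by rewrite [t1 * _]mulrC -ler_pdivrMr // ltW // /n truncnS_gt.
have Ln0 : 0 <= L ^+ n by rewrite (le_trans ler01) // exprn_ege1.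
exists n, (ln 2 / (2 * tau)); split.
  by rewrite divr_gt0 ?mulr_gt0 // ln_gt0 // ltr1n.
move=> rho step inD t x sigma t0 xr Ss.
have short y sigma' u : `|y| <= rho -> S sigma' -> 0 <= u <= 2 * tau ->
    `|phi u y sigma'| <= L ^+ n * `|y|.
  move=> yr Ss' /andP[u0 u2]; apply: (flow_iter_bound t10 L1 step) => //.
    by rewrite ler_wpM2l.
  by rewrite u0 (le_trans u2 taun).
apply: (exp_decay_of_halving tau0 Ln0 short) => //.
exact: lyap_halving tau0 Ln0 ctau short inD.
Qed.

Lemma lyap_invariant t1 rho : 0 < t1 ->
  (forall y sigma u, `|y| <= rho -> S sigma -> 0 <= u <= t1 -> D (phi u y sigma)) ->
  forall x sigma, `|x| <= rho -> c * `|x| `^ p < t1 * rho `^ p -> S sigma ->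
  forall t, 0 <= t -> D (phi t x sigma).
Proof.
move=> t10 short x sigma xr hc Ss; have [_ c0 _ _ _] := lH.
set a := c * `|x| `^ p in hc.
have a0 : 0 <= a by rewrite mulr_ge0 ?powR_ge0 // ltW.
have q0 : 0 < rho `^ p by rewrite -(pmulr_rgt0 _ t10); apply: le_lt_trans hc.
(* t1' lies strictly between a / rho^p and t1: every window of length t1' contains
   a return to B(0, rho), and the slack t1 - t1' is the induction step. *)
pose t1' := (t1 + a / rho `^ p) / 2.
have aq : a / rho `^ p < t1 by rewrite ltr_pdivrMr.
have aq0 : 0 <= a / rho `^ p by rewrite divr_ge0 // ltW.
have at1' : a < t1' * rho `^ p by rewrite -ltr_pdivrMr // /t1'; lra.
have t1'_lt : 0 <= t1' < t1 by apply/andP; split; rewrite /t1'; lra.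
have Dx : D x by rewrite -(flow0 x Ss); apply: short xr Ss _; rewrite lexx ltW.
apply: (real_step_ind (tau := t1 - t1')); first by rewrite subr_gt0; lra.
move=> t t0 IH; have [tt1|tt1] := leP t t1; first by apply: short; rewrite ?t0.
have window : 0 <= t - t1 <= t - t1 + t1' by apply/andP; split; lra.
have Dwindow u : 0 <= u <= t - t1 + t1' -> D (phi u x sigma).
  by move=> /andP[u0 u1]; apply: IH; rewrite u0 /=; lra.
have hc' : a < (t - t1 + t1' - (t - t1)) * rho `^ p by rewrite addrAC subrr add0r.
have [s /andP[s1 s2] hs] :=
  lyap_reaches_ball Ss Dx window (le_trans (normr_ge0 x) xr) Dwindow hc'.
have s0 : 0 <= s by lra.
rewrite (flow_split x (s := s) Ss); last by apply/andP; split; lra.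
by apply: (short _ _ _ hs (signal_shift Ss s0)); apply/andP; split; lra.
Qed.

End Lyapunov.

Section Stability.
Variables (t1 G0 : R) (beta : R -> R).
Hypotheses (t1_gt0 : 0 < t1) (G0_gt0 : 0 < G0) (betaK : classKinf beta).
Hypothesis beta_lin0 : (limsup_0right (fun r => (beta r / r)%R) < +oo)%E.
Hypothesis flow_le_beta : forall t x sigma, 0 <= t <= t1 -> S sigma ->
  `|phi t x sigma| <= G0 * beta `|x|.

Lemma ULES_of_lyap r V p c : 0 < r -> lyap_hyp S phi (@cball R X r) V p c ->
  ULES S phi.
Proof.
move=> r_gt0 lH.
have [_ _ _ beta0] := betaK.
have [del [K [del0 betaK0]]] := linear_bound_near0 beta0 beta_lin0.
pose L := Num.max 1 (G0 * K).
have L1 : 1 <= L by rewrite le_max lexx.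
have step y sigma t : `|y| <= del / 2 -> S sigma -> 0 <= t <= t1 ->
    `|phi t y sigma| <= L * `|y|.
  move=> yd Ss tt; apply: le_trans (flow_le_beta y tt Ss) _.
  have := betaK0 `|y| ltac:(by rewrite normr_ge0 /=; lra).
  move=> /(ler_wpM2l (ltW G0_gt0)) /le_trans; apply.
  by rewrite mulrA ler_wpM2r // le_max lexx orbT.
have [n [lam [lam0 decay]]] := lyap_exp_decay lH t1_gt0 L1.
have Ln0 : 0 < L ^+ n by rewrite exprn_gt0 // (lt_le_trans ltr01 L1).
pose rho := Num.min r (del / 2) / L ^+ n.
have Lrho : L ^+ n * rho = Num.min r (del / 2) by rewrite mulrC divfK ?gt_eqF.
exists rho, (2 * L ^+ n), lam; split => //.
- by rewrite divr_gt0 // lt_min r_gt0 divr_gt0.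
- by rewrite mulr_gt0.
have min_r : Num.min r (del / 2) <= r by rewrite ge_min lexx.
have min_del : Num.min r (del / 2) <= del / 2 by rewrite ge_min lexx orbT.
move=> t x sigma t0 xr Ss; apply: (decay rho _ _ t x sigma t0 xr Ss); rewrite Lrho.
  by move=> y ? ? yr; apply/step/(le_trans yr).
by move=> y yr; apply: le_trans yr min_r.
Qed.

Lemma UGES_of_lyap V p c : (forall r, 0 <= r -> beta r = r) ->
  lyap_hyp S phi [set: X] V p c -> UGES S phi.
Proof.
move=> beta_id lH.
pose L := Num.max 1 G0.
have L1 : 1 <= L by rewrite le_max lexx.
have step y sigma t : S sigma -> 0 <= t <= t1 -> `|phi t y sigma| <= L * `|y|.
  move=> Ss tt; apply: le_trans (flow_le_beta y tt Ss) _.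
  by rewrite beta_id // ler_wpM2r // le_max lexx orbT.
have [n [lam [lam0 decay]]] := lyap_exp_decay lH t1_gt0 L1.
exists (2 * L ^+ n), lam; split => //.
  by rewrite mulr_gt0 // exprn_gt0 // (lt_le_trans ltr01 L1).
move=> t x sigma t0 Ss.
by apply: (decay `|x| _ _ t x sigma t0 (lexx _) Ss) => // y *; apply: step.
Qed.

Lemma lyap_stays_in_ball Rb V p c : 0 < Rb -> lyap_hyp S phi (@cball R X Rb) V p c ->
  forall t x sigma, 0 <= t ->
    `|x| < Kinv beta (Rb / G0) * Num.min 1 ((t1 / c) `^ p^-1) -> S sigma ->
    `|phi t x sigma| <= Rb.
Proof.
move=> Rb0 lH t x sigma t0 xr Ss; have [p0 c0 _ _ _] := lH.
have [rho0 brho] := Kinv_spec betaK (divr_ge0 (ltW Rb0) (ltW G0_gt0)).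
set rho := Kinv beta (Rb / G0) in rho0 brho xr.
set q := (t1 / c) `^ p^-1 in xr.
have q0 : 0 <= q by apply: powR_ge0.
have qP : q `^ p = t1 / c.
  by rewrite /q -powRrM mulVf ?gt_eqF // powRr1 // divr_ge0 // ltW.
have x_rho : `|x| <= rho.
  by apply: ltW (lt_le_trans xr _); rewrite ler_piMr // ge_min lexx.
have x_rhoq : `|x| < rho * q.
  by apply: lt_le_trans xr _; rewrite ler_wpM2l // ge_min lexx orbT.
have short y sigma' u : `|y| <= rho -> S sigma' -> 0 <= u <= t1 ->
    @cball R X Rb (phi u y sigma').
  move=> yr Ss' uu; apply: le_trans (flow_le_beta y uu Ss') _.
  rewrite -[Rb](@divfK _ G0) ?gt_eqF // [_ * G0]mulrC -brho.
  by rewrite ler_wpM2l ?(ltW G0_gt0) //; apply: classKinf_le betaK _; rewrite normr_ge0 yr.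
apply: (lyap_invariant lH t1_gt0 short x_rho _ Ss t0).
have : `|x| `^ p < rho `^ p * (t1 / c).
  by rewrite -qP -powRM //; apply: gt0_ltr_powR; rewrite ?nnegrE ?mulr_ge0.
have -> : t1 * rho `^ p = c * (rho `^ p * (t1 / c)) by field; rewrite gt_eqF.
by rewrite ltr_pM2l.
Qed.

Lemma USGES_of_lyap (V : R -> X -> R) (p c : R -> R) :
  (forall r, 0 < r -> lyap_hyp S phi (@cball R X r) (V r) (p r) (c r)) ->
  limsup_pinfty (fun r => (Kinv beta (r / G0) *
                           Num.min 1 ((t1 / c r) `^ (p r)^-1))%R) = +oo%E ->
  USGES S phi.
Proof.
move=> lH hlim r r_gt0.
have [r0 [M0 [lam [r0_gt0 M0_gt0 lam0 local]]]] := ULES_of_lyap ltr01 (lH 1 ltr01).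
have [Rb Rb0 hR] := limsup_pinfty_gt r hlim.
have lHR := lH Rb Rb0; have [P0 C0 _ _ _] := lHR.
set P := p Rb in lHR P0 hR; set C := c Rb in lHR C0 hR.
have bounded t x sigma : 0 <= t -> `|x| <= r -> S sigma -> `|phi t x sigma| <= Rb.
  by move=> t0 xr; apply: (lyap_stays_in_ball Rb0 lHR t0 (le_lt_trans xr hR)).
have rP0 : 0 < r0 `^ P by rewrite powR_gt0.
pose T := C * r `^ P / r0 `^ P + 1.
have T0 : 0 <= T by rewrite /T addr_ge0 // divr_ge0 ?powR_ge0 // mulr_ge0 ?powR_ge0 // ltW.
have reach x sigma : `|x| <= r -> S sigma ->
    exists2 s, 0 <= s <= T & `|phi s x sigma| <= r0.
  move=> xr Ss; have Dx : @cball R X Rb x by rewrite /cball /= -(flow0 x Ss) bounded.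
  apply: (lyap_reaches_ball lHR Ss Dx (introT andP (conj (lexx 0) T0)) (ltW r0_gt0)).
    by move=> u /andP[u0 _]; apply: bounded.
  rewrite subr0 /T mulrDl divfK ?gt_eqF // mul1r.
  apply: le_lt_trans (_ : C * r `^ P < _); last by rewrite ltrDl.
  rewrite ler_wpM2l ?(ltW C0) //; apply: ge0_ler_powR; rewrite ?nnegrE ?(ltW P0) ?(ltW r_gt0) //.
have := exp_bound_of_reach r0_gt0 M0_gt0 lam0 T0 local bounded reach.
by exists (Num.max M0 (Rb / r0) * expR (lam * T)), lam; rewrite ?mulr_gt0 ?expR_gt0 ?lt_max ?M0_gt0.
Qed.

End Stability.

End Flow.

Theorem theorem4 (R : realType) (X : completeNormedModType R) (Q : Type)
    (S : set (R -> Q)) (phi : R -> X -> (R -> Q) -> X)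
    (t1 G0 : R) (beta : R -> R) :
  signal_set S -> fwd_complete S phi ->
  0 < t1 -> 0 < G0 -> classKinf beta ->
  (limsup_0right (fun r => (beta r / r)%R) < +oo)%E ->
  (forall t x sigma, 0 <= t <= t1 -> S sigma ->
     `|phi t x sigma| <= G0 * beta `|x|) ->
  [/\
   (* (i) *)
   (exists r (V : X -> R) p c, 0 < r /\ lyap_hyp S phi (@cball R X r) V p c) ->
     ULES S phi,
   (* (ii) *)
   (exists (V : R -> X -> R) (p c : R -> R),
      (forall r, 0 < r -> lyap_hyp S phi (@cball R X r) (V r) (p r) (c r)) /\
      limsup_pinfty (fun r => (Kinv beta (r / G0) *
                              Num.min 1 ((t1 / c r) `^ (p r)^-1))%R) = +oo%E) ->
     USGES S phi &
   (* (iii) *)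
   (forall r, 0 <= r -> beta r = r) ->
   (exists (V : X -> R) p c, lyap_hyp S phi [set: X] V p c) ->
     UGES S phi].
Proof.
move=> sS fS t1_gt0 G0_gt0 betaK beta_lin0 flow_le_beta; split.
- move=> [r [V [p [c [r_gt0 lH]]]]].
  exact: (ULES_of_lyap (X := X) sS fS t1_gt0 G0_gt0 betaK beta_lin0 flow_le_beta r_gt0 lH).
- move=> [V [p [c [lH hlim]]]].
  exact: (USGES_of_lyap (X := X) sS fS t1_gt0 G0_gt0 betaK beta_lin0 flow_le_beta lH hlim).
- move=> beta_id [V [p [c lH]]].
  exact: (UGES_of_lyap (X := X) sS fS t1_gt0 flow_le_beta beta_id lH).
Qed.
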